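(* Let $a\ge 2$ be an integer, $p$ a prime and $n\ge 1$ an integer. Then $$N=\frac{a^{p^n}-1}{a^{p^{n-1}}-1}$$ is primover to base $a$ if and only if $\gcd\bigl(N,\,a^{p^{n-1}}-1\bigr)=1$.
   Context: For an integer $a>1$ and an odd integer $n>1$ with $\gcd(a,n)=1$: $h_a(n)$ denotes the multiplicative order of $a$ modulo $n$. A cyclotomic coset of $a$ modulo $n$ is a set of the form $\{\, s a^j \bmod n : j\ge 0\,\}$ with $s\in\{1,\dots,n-1\}$; these cosets partition $\{1,\dots,n-1\}$, and $r_a(n)$ denotes the number of distinct cyclotomic cosets of $a$ modulo $n$. An odd composite number $n$ coprime to $a$ is called an overpseudoprime to base $a$ if $n=r_a(n)\,h_a(n)+1$. An integer $N>1$ is called primover to base $a$ if it is either prime or an overpseudoprime to base $a$. *)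

From mathcomp Require Import all_boot.
Set Implicit Arguments. Unset Strict Implicit. Unset Printing Implicit Defensive.

(* multiplicative order of a modulo n: the least k > 0 with a^k = 1 mod n
   (0 if none exists, which does not happen when coprime a n and n > 1). *)
Definition ord_mod (a n : nat) : nat :=
  if n <= 1 then 1 else
  let P := fun k => (0 < k) && (a ^ k == 1 %[mod n]) in
  head 0 [seq k <- iota 1 n | P k].

Definition mul_mod (n a : nat) (Hn : 0 < n) (x : 'I_n) : 'I_n :=
  Ordinal (ltn_pmod (x * a) Hn).

Definition cyc_coset (n a : nat) (Hn : 0 < n) (s : 'I_n) : {set 'I_n} :=
  [set i | fconnect (mul_mod a Hn) s i].

Definition num_cosets (a n : nat) : nat :=
  match n as m return m = n -> nat with
  | 0 => fun _ => 0
  | m.+1 => fun _ =>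
      #| [set cyc_coset a (ltn0Sn m) s | s : 'I_m.+1 & 0 < val s] |
  end erefl.

Definition overpseudoprime (a n : nat) : Prop :=
  odd n /\ 1 < n /\ ~~ prime n /\ coprime a n /\
  n = num_cosets a n * ord_mod a n + 1.

Definition primover (a N : nat) : Prop :=
  1 < N /\ (prime N \/ overpseudoprime a N).

From mathcomp Require Import all_boot.
From mathcomp Require Import cyclic.
Set Implicit Arguments. Unset Strict Implicit. Unset Printing Implicit Defensive.

(* Let b = a^(p^(n-1)), so that N = (b^p - 1)/(b - 1) = 1 + b + ... + b^(p-1).
   Then b < N, N = 1 (mod b) (hence N is coprime to a) and N | a^(p^n) - 1.

   For 1 < N coprime to a, multiplication by a permutes Z/NZ with
   period h = ord_a(N); every cyclotomic coset has at most h elements, the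
   cosets of the N - 1 nonzero residues partition them, so N = r_a(N) h + 1
   holds iff every nonzero residue has an orbit of size exactly h.

   (=>) If a prime q divides both N and b - 1, then q < N, so N is not
   prime; and s = N/q satisfies s b = s (mod N), an orbit of size at most
   p^(n-1) < h (h > p^(n-1) because b < N), so N is no overpseudoprime.
   (<=) If gcd(N, b - 1) = 1, every prime q | N has ord_a(q) = p^n.  If
   s a^k = s (mod N) with 0 < s < N, some prime q | N divides a^k - 1, so
   p^n | k and a^k = 1 (mod N): all nonzero orbits have size h.  Finally N
   is odd: were it even, a would be odd and 2 would divide gcd(N, b - 1). *)

Lemma head_filter (T : Type) (x0 : T) (P : pred T) (s : seq T) :
  head x0 (filter P s) = nth x0 s (find P s).
Proof. by elim: s => //= x s IH; case: (P x). Qed.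

(* totient n <= n, so Euler's exponent lies in the range searched by ord_mod. *)
Lemma totient_le n : totient n <= n.
Proof.
rewrite totient_count_coprime.
apply: leq_trans (_ : \sum_(0 <= d < n) 1 <= n).
  by apply: leq_sum => i _; case: (coprime _ _).
by rewrite sum_nat_const_nat subn0 muln1.
Qed.

Lemma prime_common_divisor m n : 0 < m -> ~~ coprime m n ->
  exists2 q, prime q & (q %| m) && (q %| n).
Proof.
move=> m0 ncop; have g1 : 1 < gcdn m n.
  by rewrite ltn_neqAle eq_sym ncop gcdn_gt0 m0.
exists (pdiv (gcdn m n)); first exact: pdiv_prime.
by rewrite !(dvdn_trans (pdiv_dvd _)) ?dvdn_gcdl ?dvdn_gcdr.
Qed.

Lemma prime_divisor_of_factor N s x : 0 < s -> s < N -> N %| s * x ->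
  exists2 q, prime q & (q %| N) && (q %| x).
Proof.
move=> s0 sN dv; apply: prime_common_divisor; first exact: leq_ltn_trans sN.
apply/negP => cop; rewrite Gauss_dvdl // in dv.
by move: sN; rewrite ltnNge dvdn_leq.
Qed.

(* If N is even and coprime to a, then a^k - 1 is even too (k > 0). *)
Lemma odd_of_coprime_pred a N k : 0 < k -> coprime a N ->
  coprime N (a ^ k - 1) -> odd N.
Proof.
move=> k0 copaN copN; apply/negPn/negP => evN.
have d2 : 2 %| N by rewrite dvdn2.
have oa : odd a by rewrite -coprimen2 (coprime_dvdr d2).
have oak : odd (a ^ k - 1) by rewrite -coprime2n (coprime_dvdl d2).
move: oak; rewrite oddB ?expn_gt0 ?(odd_gt0 oa) // oddX oa.
by rewrite orbT.
Qed.

Lemma ord_mod_spec a N : 1 < N -> coprime a N ->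
  [/\ 0 < ord_mod a N, a ^ ord_mod a N == 1 %[mod N] &
      forall k, 0 < k -> k < ord_mod a N -> a ^ k != 1 %[mod N]].
Proof.
move=> N1 cop; rewrite /ord_mod (leqNgt N 1) N1 /= head_filter.
set P := fun k => _.
have hasP : has P (iota 1 N).
  apply/hasP; exists (totient N).
    by rewrite mem_iota totient_gt0 (ltn_trans _ N1) //= add1n ltnS totient_le.
  by rewrite /P totient_gt0 (ltn_trans _ N1) //=; apply/eqP/Euler_exp_totient.
have iN : find P (iota 1 N) < N by rewrite -{2}(size_iota 1 N) -has_find.
have := nth_find 0 hasP; rewrite nth_iota // => /andP[h0 h1].
split => // k k0 kh.
have lt : k.-1 < find P (iota 1 N) by rewrite -ltnS prednK // -add1n.
have := before_find 0 lt.
by rewrite nth_iota ?(ltn_trans lt iN) // add1n prednK // /P k0 /= => ->.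
Qed.

Lemma ord_mod_dvd a N k : 1 < N -> coprime a N ->
  (a ^ k == 1 %[mod N]) = (ord_mod a N %| k).
Proof.
move=> N1 cop; have [h0 hE hmin] := ord_mod_spec N1 cop.
set h := ord_mod a N in h0 hE hmin *.
have -> : (a ^ k == 1 %[mod N]) = (a ^ (k %% h) == 1 %[mod N]).
  rewrite {1}(divn_eq k h) (mulnC (k %/ h)) expnD expnM -modnMml -modnXm.
  by rewrite (eqP hE) modnXm exp1n modnMml mul1n.
rewrite /dvdn; case: (posnP (k %% h)) => [->|r0]; first by rewrite expn0 eqxx.
by rewrite (negbTE (hmin _ r0 (ltn_pmod _ h0))).
Qed.

Lemma order_le_per (T : finType) (f : T -> T) x m :
  0 < m -> iter m f x = x -> order f x <= m.
Proof.
move=> m0 Hm; rewrite /order -(size_traject f x m).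
apply: leq_trans (card_size _); apply/subset_leq_card/subsetP => y.
rewrite inE => /iter_findex <-; apply/trajectP.
exists (findex f x y %% m); first by rewrite ltn_pmod.
have Hq q : iter (q * m) f x = x by elim: q => [|q IH] //; rewrite mulSn iterD IH Hm.
by rewrite {1}(divn_eq (findex f x y) m) addnC iterD Hq.
Qed.

Section PeriodicMap.
Variables (T : finType) (f : T -> T) (h : nat).
Hypothesis h0 : 0 < h.
Hypothesis per : forall x, iter h f x = x.

Lemma per_inj : injective f.
Proof. by move=> x y fxy; rewrite -(per x) -(per y) -(prednK h0) !iterSr fxy. Qed.

Lemma order_eq_per x m : 0 < m -> iter m f x = x ->
  (forall k, 0 < k -> k < m -> iter k f x != x) -> order f x = m.
Proof.
move=> m0 Hm Hmin; apply/eqP; rewrite eqn_leq order_le_per //= leqNgt.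
apply/negP => lt.
by have := Hmin _ (order_gt0 f x) lt; rewrite (iter_order per_inj) eqxx.
Qed.

End PeriodicMap.

Lemma iter_mul a N (N0 : 0 < N) k (x : 'I_N) :
  val (iter k (mul_mod a N0) x) = x * a ^ k %% N.
Proof.
elim: k => [|k IH]; first by rewrite expn0 muln1 modn_small.
by rewrite iterS /= IH modnMml expnSr mulnA.
Qed.

Lemma card_coset a N (N0 : 0 < N) s :
  #|cyc_coset a N0 s| = order (mul_mod a N0) s.
Proof. by rewrite /order /cyc_coset; apply: eq_card => i; rewrite inE. Qed.

Definition coset_set a N (N0 : 0 < N) : {set {set 'I_N}} :=
  [set cyc_coset a N0 s | s : 'I_N & 0 < val s].

Lemma num_cosetsE a N (N0 : 0 < N) : num_cosets a N = #|coset_set a N0|.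
Proof. by case: N N0 => // m N0; rewrite (bool_irrelevance N0 (ltn0Sn m)). Qed.

Lemma card_nonzero_residues N : #|[set s : 'I_N | 0 < val s]| = N.-1.
Proof.
case: N => [|m]; first by apply/eqP; rewrite cards_eq0; apply/eqP/setP => -[].
have -> : [set s : 'I_m.+1 | 0 < val s] = [set~ ord0].
  by apply/setP => i; rewrite !inE lt0n.
by rewrite cardsC1 card_ord.
Qed.

Section Cosets.
Variables (a N : nat).
Hypotheses (N1 : 1 < N) (cop : coprime a N).
Let N0 : 0 < N := ltnW N1.
Local Notation f := (mul_mod a N0).
Local Notation h := (ord_mod a N).

Lemma mul_mod_periodic x : iter h f x = x.
Proof.
have [_ hE _] := ord_mod_spec N1 cop.
apply: val_inj; rewrite iter_mul -modnMmr (eqP hE) (modn_small N1).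
by rewrite muln1 modn_small.
Qed.

(* Since a is a unit modulo N, orbits of nonzero residues stay nonzero. *)
Lemma mul_mod_nonzero (s : 'I_N) k : 0 < val s -> 0 < val (iter k f s).
Proof.
move=> s0; rewrite iter_mul lt0n; apply/negP => /eqP H.
have : N %| s * a ^ k by rewrite /dvdn H.
rewrite Gauss_dvdl; last by rewrite coprime_sym coprimeXl.
by move/(dvdn_leq s0); rewrite leqNgt ltn_ord.
Qed.

Lemma sum_card_cosets : N.-1 = \sum_(C in coset_set a N0) #|C|.
Proof.
have [h0 _ _] := ord_mod_spec N1 cop.
have inj := per_inj h0 mul_mod_periodic.
set D := [set s : 'I_N | 0 < val s].
have -> : coset_set a N0 = equivalence_partition (fconnect f) D.
  apply: eq_in_imset => s; rewrite inE => s0.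
  apply/setP => y; rewrite !inE; case Hc: (fconnect f s y); rewrite ?andbF //.
  by move/iter_findex: Hc => <-; rewrite mul_mod_nonzero.
rewrite -card_nonzero_residues; apply/card_partition/equivalence_partitionP.
move=> x y z _ _ _; split; first exact: connect0.
move=> Hxy; apply/idP/idP; last exact: connect_trans.
by apply: connect_trans; rewrite fconnect_sym.
Qed.

Lemma cosets_iff : N = num_cosets a N * h + 1 <->
  (forall s : 'I_N, 0 < val s -> order f s = h).
Proof.
have [h0 _ _] := ord_mod_spec N1 cop.
have card_le C : C \in coset_set a N0 -> #|C| <= h ?= iff (#|C| == h).
  move=> /imsetP[s _ ->]; apply: leqif_eq.
  by rewrite card_coset order_le_per // mul_mod_periodic.
have [_ sumE] := leqif_sum card_le.
rewrite -sum_card_cosets sum_nat_const -num_cosetsE in sumE.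
apply: (@iff_trans _ (N.-1 == num_cosets a N * h)).
  split=> [E | /eqP E]; first by apply/eqP; rewrite {1}E addn1.
  by rewrite -E addn1 prednK // ltnW.
rewrite sumE; split=> [/forall_inP Hall s s0 | Hall].
  by apply/eqP; rewrite -card_coset Hall //; apply/imsetP; exists s; rewrite ?inE.
by apply/forall_inP => C /imsetP[s]; rewrite inE => s0 ->; rewrite card_coset Hall.
Qed.

End Cosets.

Lemma repunit_quotient b p : 2 <= b -> 2 <= p ->
  let N := (b ^ p - 1) %/ (b - 1) in
  [/\ (b - 1) * N = b ^ p - 1, b < N & coprime b N].
Proof.
move=> b2 p2 N.
have NE : N = \sum_(i < p) b ^ i by rewrite /N !subn1 predn_exp mulKn // -subn1 subn_gt0.
split.
- by rewrite mulnC /N divnK // !subn1 predn_exp dvdn_mulr.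
- rewrite NE; case: p p2 {N NE} => [|[|p']] // _.
  by rewrite 2!big_ord_recl /= expn0 expn1 addnA addnC add1n ltn_addl.
- rewrite NE; case: p p2 {N NE} => [|p'] // _.
  rewrite big_ord_recl expn0 addnC /coprime.
  have -> : \sum_(i < p') b ^ bump 0 i = (\sum_(i < p') b ^ i) * b.
    by rewrite big_distrl /=; apply: eq_bigr => i _; rewrite /bump /= add1n expnSr.
  by rewrite gcdnMDl gcdn1.
Qed.

Section RepunitQuotient.
Variables a p n N : nat.
Hypotheses (a2 : 2 <= a) (pp : prime p) (n1 : 1 <= n).
Let b := a ^ (p ^ n.-1).
Hypotheses (EN : (b - 1) * N = a ^ (p ^ n) - 1) (bN : b < N) (copaN : coprime a N).

Lemma base_gt1 : 1 < b.
Proof. by rewrite -(expn0 a) ltn_exp2l // expn_gt0 prime_gt0. Qed.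

Lemma N_gt1 : 1 < N.
Proof. exact: ltn_trans base_gt1 bN. Qed.

Lemma pow_pn_mod_N : a ^ (p ^ n) == 1 %[mod N].
Proof. by rewrite eqn_mod_dvd ?expn_gt0 ?(ltnW a2) // -EN dvdn_mull. Qed.

(* Since N > b, the order of a modulo N exceeds p^(n-1). *)
Lemma ord_mod_large : p ^ n.-1 < ord_mod a N.
Proof.
have [h0 hE _] := ord_mod_spec N_gt1 copaN.
rewrite ltnNge; apply/negP => hle.
have ah : 0 < a ^ ord_mod a N - 1 by rewrite subn_gt0 -{1}(expn0 a) ltn_exp2l.
have Ndvd : N %| a ^ ord_mod a N - 1 by rewrite -eqn_mod_dvd ?expn_gt0 ?(ltnW a2).
have ahb : a ^ ord_mod a N - 1 <= b - 1 by rewrite leq_sub2r // leq_pexp2l // ltnW.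
have := leq_trans (dvdn_leq ah Ndvd) ahb.
by rewrite leqNgt (leq_ltn_trans (leq_subr 1 b) bN).
Qed.

(* If gcd(N, b - 1) = 1, every prime divisor q of N has ord_a(q) = p^n:
   the order divides p^n but not p^(n-1), as q does not divide b - 1. *)
Lemma prime_divisor_order q : prime q -> q %| N -> coprime N (b - 1) ->
  ord_mod a q = p ^ n.
Proof.
move=> qp qN copN; have q1 := prime_gt1 qp.
have copaq : coprime a q := coprime_dvdr qN copaN.
have : ord_mod a q %| p ^ n.
  by rewrite -ord_mod_dvd // -(modn_dvdm _ qN) (eqP pow_pn_mod_N) modn_dvdm.
case/(dvdn_pfactor _ _ pp) => j jn ej; rewrite ej; congr (_ ^ _).
apply/eqP; rewrite eqn_leq jn /= leqNgt; apply/negP => jl.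
have : a ^ (p ^ n.-1) == 1 %[mod q].
  by rewrite ord_mod_dvd // ej; apply: dvdn_exp2l; rewrite -ltnS prednK.
rewrite eqn_mod_dvd ?expn_gt0 ?(ltnW a2) // => qb.
have : q %| gcdn N (b - 1) by rewrite dvdn_gcd qN qb.
by rewrite (eqP copN) dvdn1 => /eqP q1E; rewrite q1E in q1.
Qed.

Local Notation f := (mul_mod a (ltnW N_gt1)).

(* A prime common divisor q of N and b - 1 rules out primality of N and
   gives the nonzero residue N/q an orbit of size at most p^(n-1). *)
Lemma primover_coprime : primover a N -> coprime N (b - 1).
Proof.
case=> _ Hor; have [// | ncop] := boolP (coprime N (b - 1)).
have [q qp /andP[qN qb]] := prime_common_divisor (ltnW N_gt1) ncop.
have b1 : 0 < b - 1 by rewrite subn_gt0 base_gt1.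
have qlt : q < N.
  by apply: leq_ltn_trans (dvdn_leq b1 qb) (leq_ltn_trans (leq_subr 1 b) bN).
case: Hor => [Pr | [_ [_ [_ [_ E]]]]].
  by move: qN; rewrite (dvdn_prime2 qp Pr) ltn_eqF.
have sN : N %/ q < N by apply: ltn_Pdiv; [exact: prime_gt1 | exact: ltnW N_gt1].
pose s := Ordinal sN.
have s0 : 0 < val s by rewrite /= divn_gt0 ?prime_gt0 // dvdn_leq // (ltnW N_gt1).
have fixed_s : iter (p ^ n.-1) f s = s.
  apply: val_inj; rewrite iter_mul /= -/b.
  have eb : b = (b - 1) %/ q * q + 1 by rewrite divnK // subnK // ltnW // base_gt1.
  by rewrite eb mulnDr muln1 mulnCA divnK // modnMDl modn_small.
have pn0 : 0 < p ^ n.-1 by rewrite expn_gt0 prime_gt0.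
have := order_le_per pn0 fixed_s.
by rewrite (proj1 (cosets_iff N_gt1 copaN) E) // leqNgt ord_mod_large.
Qed.

(* Conversely, if gcd(N, b - 1) = 1 then every nonzero orbit has size
   ord_a(N), since a shorter return time k would be a multiple of p^n. *)
Lemma coprime_primover : coprime N (b - 1) -> primover a N.
Proof.
move=> copN; split; first exact: N_gt1.
have [Pr | nPr] := boolP (prime N); [by left | right].
have oddN : odd N.
  by apply: odd_of_coprime_pred copaN copN; rewrite expn_gt0 prime_gt0.
do 4?split => //; first exact: N_gt1.
have [h0 _ hmin] := ord_mod_spec N_gt1 copaN.
have per := mul_mod_periodic N_gt1 copaN.
apply/(cosets_iff N_gt1 copaN) => s s0.
apply: (order_eq_per h0 per h0 (per s)) => k k0 kh; apply/negP => /eqP Hk.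
have ak0 : 0 < a ^ k by rewrite expn_gt0 (ltnW a2).
have : N %| s * (a ^ k - 1).
  rewrite mulnBr muln1 -eqn_mod_dvd ?leq_pmulr //.
  by move: (congr1 val Hk); rewrite iter_mul => ->; rewrite modn_small.
case/(prime_divisor_of_factor s0 (ltn_ord s)) => q qp /andP[qN qk].
have pnk : p ^ n %| k.
  rewrite -(prime_divisor_order qp qN copN) -ord_mod_dvd ?prime_gt1 //.
    by rewrite eqn_mod_dvd.
  exact: coprime_dvdr qN copaN.
have : a ^ k == 1 %[mod N].
  case/dvdnP: pnk => c ->.
  by rewrite mulnC expnM -modnXm (eqP pow_pn_mod_N) modnXm exp1n.
by rewrite (negbTE (hmin k k0 kh)).
Qed.

End RepunitQuotient.

Theorem theorem7 (a p n : nat) :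
  2 <= a -> prime p -> 1 <= n ->
  primover a ((a ^ (p ^ n) - 1) %/ (a ^ (p ^ n.-1) - 1)) <->
  coprime ((a ^ (p ^ n) - 1) %/ (a ^ (p ^ n.-1) - 1)) (a ^ (p ^ n.-1) - 1).
Proof.
move=> a2 pp n1.
have b2 : 2 <= a ^ (p ^ n.-1) by apply: base_gt1.
have Ep : a ^ (p ^ n) = (a ^ (p ^ n.-1)) ^ p by rewrite -expnM -expnSr prednK.
have [EN bN copbN] := repunit_quotient b2 (prime_gt1 pp).
rewrite -Ep in EN copbN bN *.
have copaN : coprime a ((a ^ (p ^ n) - 1) %/ (a ^ (p ^ n.-1) - 1)).
  by apply: coprime_dvdl copbN; rewrite dvdn_exp // expn_gt0 prime_gt0.
split; [exact: primover_coprime | exact: coprime_primover].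
Qed.
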